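(* Let $0\to E_1\to E_2\to E_3\to0$ be an exact sequence of $\mathfrak b_I$-modules (each a direct sum of $\mathfrak t$-weight spaces), and suppose that no weight of $E_1$ is contained in $\Delta_I^+\cup\{0\}$. Then the induced map $E_2^{\mathfrak b_I}\to E_3^{\mathfrak b_I}$ on $\mathfrak b_I$-invariants is an isomorphism.
   Context: $G$ is a connected semisimple algebraic group over $\mathbb C$, $B$ a Borel subgroup, $T\subset B$ a maximal torus with Lie algebra $\mathfrak t$, $\Delta^+$ the positive roots with respect to $B$. $I$ is a set of simple roots, $\Delta_I^+$ the positive roots lying in $\operatorname{Span}_{\mathbb Z}I$, $G_I$ the Levi subgroup containing $T$ of the parabolic subgroup $P_I\supseteq B$ associated to $I$, $B_I=G_I\cap B$, and $\mathfrak b_I=\operatorname{Lie}(B_I)=\mathfrak t\oplus\bigoplus_{\alpha\in\Delta_I^+}\mathfrak g^\alpha$. *)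

From HB Require Import structures.
From mathcomp Require Import all_boot all_order all_algebra.
From mathcomp Require Import reals.
From mathcomp Require Export complex.

Set Implicit Arguments.
Unset Strict Implicit.
Unset Printing Implicit Defensive.

Import Order.TTheory GRing.Theory Num.Theory.
Local Open Scope ring_scope.

Section LieDefs.
Variable K : fieldType.
Variable L : vectType K.
Variable br : L -> L -> L.

Definition is_lie_bracket : Prop :=
  [/\ (forall a x y z, br (a *: x + y) z = a *: br x z + br y z),
      (forall a x y z, br z (a *: x + y) = a *: br z x + br z y),
      (forall x, br x x = 0) &
      (forall x y z, br x (br y z) + br y (br z x) + br z (br x y) = 0)].

Definition lie_subalgebra (U : {vspace L}) : Prop :=
  forall x y, x \in U -> y \in U -> br x y \in U.

Definition lie_ideal (U : {vspace L}) : Prop :=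
  forall x y, y \in U -> br x y \in U.

Definition derived (U : {vspace L}) : {vspace L} :=
  <<[seq br x y | x <- vbasis U, y <- vbasis U]>>%VS.

Definition lie_solvable (U : {vspace L}) : Prop :=
  exists n, iter n derived U = 0%VS.

Definition lie_semisimple : Prop :=
  forall U, lie_ideal U -> lie_solvable U -> U = 0%VS.

Definition eigvec (f : L -> L) (x : L) : Prop := exists c : K, f x = c *: x.

Definition diagonalizable (f : L -> L) : Prop :=
  forall x, exists n (xs : 'I_n -> L),
    (forall i, eigvec f (xs i)) /\ x = \sum_(i < n) xs i.

Definition toral (t : {vspace L}) : Prop :=
  (forall x y, x \in t -> y \in t -> br x y = 0) /\
  (forall h, h \in t -> diagonalizable (br h)).

(* Cartan subalgebra of a semisimple Lie algebra = maximal toral subalgebra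
   (Lie algebra of a maximal torus T) *)
Definition cartan (t : {vspace L}) : Prop :=
  toral t /\ (forall t', toral t' -> (t <= t')%VS -> t' = t).

(* Borel subalgebra: maximal solvable subalgebra (Lie algebra of B) *)
Definition borel (b : {vspace L}) : Prop :=
  lie_subalgebra b /\ lie_solvable b /\
  (forall b', lie_subalgebra b' -> lie_solvable b' -> (b <= b')%VS -> b' = b).

Variable t : {vspace L}.

Definition tfun := subvs_of t -> K.

Definition root_vec (alpha : tfun) (x : L) : Prop :=
  forall h : subvs_of t, br (vsval h) x = alpha h *: x.

Definition is_root (alpha : tfun) : Prop :=
  (exists h, alpha h != 0) /\ (exists x, x != 0 /\ root_vec alpha x).

Definition pos_root (b : {vspace L}) (alpha : tfun) : Prop :=
  is_root alpha /\ (forall x, root_vec alpha x -> x \in b).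

Definition simple_root (b : {vspace L}) (alpha : tfun) : Prop :=
  pos_root b alpha /\
  ~ (exists beta gamma, pos_root b beta /\ pos_root b gamma /\
       forall h, alpha h = beta h + gamma h).

Definition in_Zspan (I : tfun -> Prop) (alpha : tfun) : Prop :=
  exists n (z : 'I_n -> int) (beta : 'I_n -> tfun),
    (forall i, I (beta i)) /\
    (forall h, alpha h = \sum_(i < n) (z i)%:~R * beta i h).

Definition pos_root_I (b : {vspace L}) (I : tfun -> Prop) (alpha : tfun) : Prop :=
  pos_root b alpha /\ in_Zspan I alpha.

(* b_I = t (+) sum_{alpha in Delta_I^+} g^alpha, as a predicate on L *)
Definition in_bI (b : {vspace L}) (I : tfun -> Prop) (x : L) : Prop :=
  exists (h0 : L) n (xs : 'I_n -> L),
    h0 \in t /\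
    (forall i, exists alpha, pos_root_I b I alpha /\ root_vec alpha (xs i)) /\
    x = h0 + \sum_(i < n) xs i.

Section Modules.
Variables (b : {vspace L}) (I : tfun -> Prop).

Definition is_bI_module (E : lmodType K) (rho : L -> E -> E) : Prop :=
  [/\ (forall x, in_bI b I x -> forall a u v, rho x (a *: u + v) = a *: rho x u + rho x v),
      (forall x y, in_bI b I x -> in_bI b I y -> forall a v,
          rho (a *: x + y) v = a *: rho x v + rho y v) &
      (forall x y, in_bI b I x -> in_bI b I y -> forall v,
          rho (br x y) v = rho x (rho y v) - rho y (rho x v))].

Definition wt_vec (E : lmodType K) (rho : L -> E -> E) (lam : tfun) (v : E) : Prop :=
  forall h : subvs_of t, rho (vsval h) v = lam h *: v.

Definition is_weight (E : lmodType K) (rho : L -> E -> E) (lam : tfun) : Prop :=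
  exists v, v != 0 /\ wt_vec rho lam v.

Definition weight_decomposable (E : lmodType K) (rho : L -> E -> E) : Prop :=
  forall v, exists n (vs : 'I_n -> E) (lams : 'I_n -> tfun),
    (forall i, wt_vec rho (lams i) (vs i)) /\ v = \sum_(i < n) vs i.

Definition is_bI_hom (E F : lmodType K) (rhoE : L -> E -> E) (rhoF : L -> F -> F)
    (f : E -> F) : Prop :=
  (forall a u v, f (a *: u + v) = a *: f u + f v) /\
  (forall x, in_bI b I x -> forall v, f (rhoE x v) = rhoF x (f v)).

Definition bI_invariant (E : lmodType K) (rho : L -> E -> E) (v : E) : Prop :=
  forall x, in_bI b I x -> rho x v = 0.

End Modules.
End LieDefs.

From HB Require Import structures.
From mathcomp Require Import all_boot all_order all_algebra.
From mathcomp Require Import reals.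
From mathcomp Require Import complex.
From Stdlib Require Import ClassicalEpsilon.

Set Implicit Arguments.
Unset Strict Implicit.
Unset Printing Implicit Defensive.

Import GRing.Theory.
Local Open Scope ring_scope.

(* Since t lies in b_I, a b_I-invariant vector has weight 0, and a b_I-map
   preserves weights.  Injectivity: the difference of two invariants with
   the same image comes from a weight-0 vector of E_1, which must vanish.
   Surjectivity: lift an invariant u of E_3 to E_2 and keep only the
   weight-0 component v0 of the lift; the other components map to vectors
   of nonzero weight adding up to a weight-0 vector, so they map to 0 and
   g v0 = u.  A root vector e of a root alpha in Delta_I^+ sends v0 to a
   vector of weight alpha in the kernel of g, i.e. in the image of E_1,
   where alpha is not a weight; hence e v0 = 0 and v0 is invariant. *)

Section LinearFunctions.
Variables (K : pzRingType) (E F : lmodType K) (f : E -> F).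
Hypothesis f_linear : linear f.
Let fL : {linear E -> F} := HB.pack f (GRing.isLinear.Build _ _ _ _ f f_linear).

Lemma linear_fun0 : f 0 = 0. Proof. exact: (raddf0 fL). Qed.
Lemma linear_funD u v : f (u + v) = f u + f v. Proof. exact: (raddfD fL). Qed.
Lemma linear_funB u v : f (u - v) = f u - f v. Proof. exact: (raddfB fL). Qed.
Lemma linear_funZ a u : f (a *: u) = a *: f u. Proof. exact: (linearZ_LR fL). Qed.
Lemma linear_fun_sum n (G : 'I_n -> E) : f (\sum_(i < n) G i) = \sum_(i < n) f (G i).
Proof. exact: (raddf_sum fL). Qed.

End LinearFunctions.

Section BorelModules.
Variables (K : fieldType) (L : vectType K) (br : L -> L -> L) (t b : {vspace L}).
Variable I : tfun t -> Prop.

Local Notation bI := (in_bI br b I).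
Local Notation zero_wt := (fun _ : subvs_of t => 0 : K).

Lemma in_bI_cartan h : h \in t -> bI h.
Proof.
by move=> th; exists h, 0%N, (fun _ => 0); split=> //; split=> [[]//|]; rewrite big_ord0 addr0.
Qed.

Lemma in_bI_root_vec alpha e : pos_root_I br b I alpha -> root_vec br alpha e -> bI e.
Proof.
move=> alpha_pos e_root; exists 0, 1%N, (fun _ => e); split; first exact: mem0v.
by split=> [_|]; [exists alpha | rewrite big_ord1 add0r].
Qed.

Section Action.
Variables (E : lmodType K) (rho : L -> E -> E).
Hypothesis rho_module : is_bI_module br b I rho.

Local Notation wt := (wt_vec (t:=t) rho).

Lemma bI_action_linear x : bI x -> linear (rho x).
Proof. by case: rho_module => rho_lin _ _; apply: rho_lin. Qed.

Lemma bI_action0 v : rho 0 v = 0.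
Proof.
have b0 : bI 0 by apply/in_bI_cartan/mem0v.
case: rho_module => _ rho_linl _; have := rho_linl 0 0 b0 b0 1 v.
by rewrite !scale1r addr0 => /eqP; rewrite eq_sym -subr_eq0 addrK => /eqP.
Qed.

Lemma bI_actionZl a x v : bI x -> rho (a *: x) v = a *: rho x v.
Proof.
case: rho_module => _ rho_linl _ bx; have b0 : bI 0 by apply/in_bI_cartan/mem0v.
by have := rho_linl x 0 bx b0 a v; rewrite !addr0 bI_action0 addr0.
Qed.

Lemma bI_actionDl x y v : bI x -> bI y -> rho (x + y) v = rho x v + rho y v.
Proof. by case: rho_module => _ rho_linl _ bx b_y; rewrite -[x]scale1r rho_linl // !scale1r. Qed.

Lemma bI_action_cartan_linear (h : subvs_of t) : linear (rho (vsval h)).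
Proof. exact/bI_action_linear/in_bI_cartan/subvsP. Qed.

Lemma wt_vec0 lam : wt lam 0.
Proof. by move=> h; rewrite (linear_fun0 (bI_action_cartan_linear h)) scaler0. Qed.

Lemma wt_vecD lam u v : wt lam u -> wt lam v -> wt lam (u + v).
Proof.
by move=> wu wv h; rewrite (linear_funD (bI_action_cartan_linear h)) wu wv scalerDr.
Qed.

Lemma wt_vecZ lam a v : wt lam v -> wt lam (a *: v).
Proof.
by move=> wv h; rewrite (linear_funZ (bI_action_cartan_linear h)) wv !scalerA mulrC.
Qed.

Lemma wt_vecB lam u v : wt lam u -> wt lam v -> wt lam (u - v).
Proof. by move=> wu wv; rewrite -scaleN1r; apply/wt_vecD/wt_vecZ. Qed.

Lemma wt_vec_sum lam n (vs : 'I_n -> E) :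
  (forall i, wt lam (vs i)) -> wt lam (\sum_(i < n) vs i).
Proof. by move=> wvs; elim/big_rec: _ => [|i v _]; [apply: wt_vec0 | apply: wt_vecD]. Qed.

Lemma wt_vec_indep mu n (vs : 'I_n -> E) (lams : 'I_n -> tfun t) :
  (forall i, wt (lams i) (vs i)) ->
  (forall i, vs i = 0 \/ exists h, lams i h != mu h) ->
  wt mu (\sum_(i < n) vs i) -> \sum_(i < n) vs i = 0.
Proof.
elim: n vs lams => [|n IHn] vs lams wvs vs_off_mu; first by rewrite big_ord0.
rewrite big_ord_recl => wsum.
case: (vs_off_mu ord0) => [vs0 | [h lam0h]].
  move: wsum; rewrite vs0 !add0r; apply: (IHn _ (lams \o lift ord0)) => i.
    exact: wvs.
  exact: vs_off_mu.
(* Applying h and subtracting lams ord0 h kills the first term. *)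
pose c i := lams (lift ord0 i) h - lams ord0 h.
have rho_h_lin := bI_action_cartan_linear h.
have hsum : (mu h - lams ord0 h) *: (vs ord0 + \sum_(i < n) vs (lift ord0 i)) =
            \sum_(i < n) c i *: vs (lift ord0 i).
  rewrite scalerBl -wsum (linear_funD rho_h_lin) (linear_fun_sum rho_h_lin) wvs.
  rewrite scalerDr opprD addrACA subrr add0r scaler_sumr -sumrB.
  by apply: eq_bigr => i _; rewrite wvs scalerBl.
have csum0 : \sum_(i < n) c i *: vs (lift ord0 i) = 0.
  apply: (IHn _ (lams \o lift ord0)) => [i|i|]; first exact/wt_vecZ/wvs.
    by case: (vs_off_mu (lift ord0 i)) => [->|]; [left; rewrite scaler0 | right].
  by rewrite -hsum; apply: wt_vecZ.
by move: hsum; rewrite csum0 => /eqP; rewrite scaler_eq0 subr_eq0 eq_sym (negbTE lam0h) => /eqP.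
Qed.

Lemma bI_invariant_wt0 v : bI_invariant br b I rho v -> wt zero_wt v.
Proof. by move=> inv_v h; rewrite inv_v ?scale0r //; apply/in_bI_cartan/subvsP. Qed.

(* b_I is spanned by t and the root vectors of Delta_I^+. *)
Lemma bI_invariant_from_generators v : wt zero_wt v ->
  (forall alpha e, pos_root_I br b I alpha -> root_vec br alpha e -> rho e v = 0) ->
  bI_invariant br b I rho v.
Proof.
move=> wv0 root_kills x [h [n [xs [th [xs_root ->]]]]].
elim: n xs xs_root => [|n IHn] xs xs_root.
  by rewrite big_ord0 addr0 -(vsprojK th) wv0 scale0r.
have [alpha [alpha_pos xn_root]] := xs_root ord_max.
have bI_init : bI (h + \sum_(i < n) xs (widen_ord (leqnSn n) i)).
  by exists h, n, (fun i => xs (widen_ord (leqnSn n) i)).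
rewrite big_ord_recr addrA bI_actionDl //; last exact: in_bI_root_vec xn_root.
by rewrite IHn ?(root_kills alpha) ?addr0.
Qed.

Lemma root_vec_act_wt alpha e lam v : bI e -> root_vec br alpha e ->
  wt lam v -> wt (fun h => lam h + alpha h) (rho e v).
Proof.
move=> be e_root wv h; have bh : bI (vsval h) by apply/in_bI_cartan/subvsP.
have [_ _ rho_br] := rho_module; have := rho_br _ _ bh be v.
rewrite e_root bI_actionZl // wv (linear_funZ (bI_action_linear be)).
by move/eqP; rewrite eq_sym subr_eq => /eqP ->; rewrite scalerDl addrC.
Qed.

Lemma weight_zero_component : weight_decomposable t rho ->
  forall v, exists v0 n (vs : 'I_n -> E) (lams : 'I_n -> tfun t),
  [/\ wt zero_wt v0, forall i, wt (lams i) (vs i),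
      forall i, vs i = 0 \/ exists h, lams i h != 0 & v = v0 + \sum_(i < n) vs i].
Proof.
move=> rho_decomp v; have [n [vs [lams [wvs ->]]]] := rho_decomp v.
pose nonzero_wt i := exists h, lams i h != 0.
pose dec i := excluded_middle_informative (nonzero_wt i).
exists (\sum_(i < n) if dec i then 0 else vs i), n,
  (fun i => if dec i then vs i else 0), lams; split.
- apply: wt_vec_sum => i; destruct (dec i) as [nz|zero_i]; first exact: wt_vec0.
  move=> h; rewrite wvs; congr (_ *: _); apply/eqP/negPn/negP => nz.
  by apply: zero_i; exists h.
- by move=> i; destruct (dec i); [apply: wvs | apply: wt_vec0].
- by move=> i; destruct (dec i); [right | left].
- by rewrite -big_split; apply: eq_bigr => i _; destruct (dec i); rewrite /= ?addr0 ?add0r.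
Qed.

End Action.

Section Homomorphisms.
Variables (E F : lmodType K) (rhoE : L -> E -> E) (rhoF : L -> F -> F) (f : E -> F).
Hypothesis f_hom : is_bI_hom br b I rhoE rhoF f.

Lemma bI_hom_wt_vec lam v : wt_vec (t:=t) rhoE lam v -> wt_vec rhoF lam (f v).
Proof.
case: f_hom => f_lin f_act wv h.
by rewrite -f_act ?wv ?(linear_funZ f_lin) //; apply/in_bI_cartan/subvsP.
Qed.

Lemma bI_hom_inj_wt_vec lam w : injective f ->
  wt_vec rhoF lam (f w) -> wt_vec (t:=t) rhoE lam w.
Proof.
case: f_hom => f_lin f_act f_inj wfw h; apply: f_inj.
by rewrite f_act ?wfw ?(linear_funZ f_lin) //; apply/in_bI_cartan/subvsP.
Qed.

End Homomorphisms.

Section ExactSequence.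
Variables (E1 E2 E3 : lmodType K).
Variables (rho1 : L -> E1 -> E1) (rho2 : L -> E2 -> E2) (rho3 : L -> E3 -> E3).
Variables (f : E1 -> E2) (g : E2 -> E3).
Hypotheses (rho2_module : is_bI_module br b I rho2) (rho3_module : is_bI_module br b I rho3).
Hypotheses (f_hom : is_bI_hom br b I rho1 rho2 f) (g_hom : is_bI_hom br b I rho2 rho3 g).
Hypothesis f_inj : injective f.
Hypothesis ker_g_sub_im_f : forall v, g v = 0 -> exists u, f u = v.

Lemma exact_wt_vec_eq0 lam v : ~ is_weight (t:=t) rho1 lam ->
  wt_vec rho2 lam v -> g v = 0 -> v = 0.
Proof.
move=> not_wt wv /ker_g_sub_im_f [u fu]; rewrite -fu in wv *.
have wu := bI_hom_inj_wt_vec f_hom f_inj wv.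
have -> : u = 0 by apply/eqP/negPn/negP => nz; apply: not_wt; exists u.
by case: f_hom => f_lin _; rewrite (linear_fun0 f_lin).
Qed.

Lemma invariants_map_inj : ~ is_weight (t:=t) rho1 zero_wt ->
  forall v w, bI_invariant br b I rho2 v -> bI_invariant br b I rho2 w ->
  g v = g w -> v = w.
Proof.
move=> no_wt0 v w inv_v inv_w gvw; have [g_lin _] := g_hom.
apply/eqP; rewrite -subr_eq0; apply/eqP/(exact_wt_vec_eq0 no_wt0).
  by apply: (wt_vecB rho2_module); apply: bI_invariant_wt0.
by rewrite (linear_funB g_lin) gvw subrr.
Qed.

Lemma invariants_map_surj : weight_decomposable t rho2 ->
  (forall alpha, pos_root_I br b I alpha -> ~ is_weight (t:=t) rho1 alpha) ->
  (forall w, exists v, g v = w) ->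
  forall u, bI_invariant br b I rho3 u ->
  exists v, bI_invariant br b I rho2 v /\ g v = u.
Proof.
move=> rho2_decomp no_root_wt g_surj u inv_u; have [g_lin g_act] := g_hom.
have [v gv] := g_surj u.
have [v0 [n [vs [lams [wv0 wvs vs_nonzero_wt v_split]]]]] :=
  weight_zero_component rho2_module rho2_decomp v.
have rest : \sum_(i < n) vs i = v - v0 by rewrite v_split addrC addKr.
have g_rest0 : \sum_(i < n) g (vs i) = 0.
  apply: (wt_vec_indep rho3_module (mu := zero_wt) (lams := lams)) => [i|i|].
  - exact: (bI_hom_wt_vec g_hom).
  - by case: (vs_nonzero_wt i) => [->|]; [left; rewrite (linear_fun0 g_lin) | move=> ?; right].
  rewrite -(linear_fun_sum g_lin) rest (linear_funB g_lin) gv.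
  apply: (wt_vecB rho3_module); first exact: bI_invariant_wt0.
  exact: (bI_hom_wt_vec g_hom).
have gv0 : g v0 = u.
  by rewrite -gv v_split (linear_funD g_lin) (linear_fun_sum g_lin) g_rest0 addr0.
exists v0; split=> //; apply: (bI_invariant_from_generators rho2_module) => // alpha e alpha_pos e_root.
have be := in_bI_root_vec alpha_pos e_root.
apply: (exact_wt_vec_eq0 (no_root_wt alpha alpha_pos)).
  by move=> h; rewrite (root_vec_act_wt rho2_module be e_root wv0) add0r.
by rewrite g_act // gv0 inv_u.
Qed.

End ExactSequence.

End BorelModules.

Theorem lemma2p3p2 (R : realType) (L : vectType R[i]) (br : L -> L -> L)
  (t b : {vspace L}) (I : tfun t -> Prop)
  (E1 E2 E3 : lmodType R[i])
  (rho1 : L -> E1 -> E1) (rho2 : L -> E2 -> E2) (rho3 : L -> E3 -> E3)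
  (f : E1 -> E2) (g : E2 -> E3) :
  is_lie_bracket br -> lie_semisimple br ->
  cartan br t -> borel br b -> (t <= b)%VS ->
  (forall alpha, I alpha -> simple_root br b alpha) ->
  is_bI_module br b I rho1 -> is_bI_module br b I rho2 -> is_bI_module br b I rho3 ->
  weight_decomposable t rho1 -> weight_decomposable t rho2 -> weight_decomposable t rho3 ->
  is_bI_hom br b I rho1 rho2 f -> is_bI_hom br b I rho2 rho3 g ->
  injective f -> (forall w, exists v, g v = w) ->
  (forall v, g v = 0 <-> exists u, f u = v) ->
  (forall lam, is_weight rho1 lam ->
     ~ (pos_root_I br b I lam \/ (forall h, lam h = 0))) ->
  (forall v w, bI_invariant br b I rho2 v -> bI_invariant br b I rho2 w ->
     g v = g w -> v = w) /\
  (forall u, bI_invariant br b I rho3 u ->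
     exists v, bI_invariant br b I rho2 v /\ g v = u).
Proof.
(* The argument only uses the module structures, weights and exactness. *)
move=> _ _ _ _ _ _ _ rho2_module rho3_module _ rho2_decomp _ f_hom g_hom f_inj g_surj
  exact_at_E2 no_bad_wt.
have ker_g_sub_im_f v : g v = 0 -> exists u, f u = v by move/exact_at_E2.
have no_wt0 : ~ is_weight (t:=t) rho1 (fun _ => 0) by move=> wt0; apply: (no_bad_wt _ wt0); right.
have no_root_wt alpha : pos_root_I br b I alpha -> ~ is_weight rho1 alpha.
  by move=> alpha_pos wt_alpha; apply: (no_bad_wt _ wt_alpha); left.
split.
  exact: (invariants_map_inj rho2_module f_hom g_hom f_inj ker_g_sub_im_f no_wt0).
exact: (invariants_map_surj rho2_module rho3_module f_hom g_hom f_inj ker_g_sub_im_f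
  rho2_decomp no_root_wt g_surj).
Qed.
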